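(* Let $H_0,H_1$ be complex Hilbert spaces, $G$ a densely defined closed operator from $H_0$ into $H_1$ and $D$ a densely defined closed operator from $H_1$ into $H_0$ with $-G^*\subset D$. Let $m\in\mathcal L(H_0)$ (not necessarily coercive) and let $a\in\mathcal L(H_1)$ be coercive. Let $\mathring T\in\mathcal L(\mathrm{dom}(\mathring G))$ be defined by $(\mathring Tu,v)_{\mathrm{dom}(\mathring G)}=(aGu,Gv)_{H_1}+(mu,v)_{H_0}$ for all $u,v\in\mathrm{dom}(\mathring G)$, and suppose $\mathrm{ran}(\mathring T)$ is closed in $\mathrm{dom}(\mathring G)$. Then the Dirichlet-to-Neumann graph $\Lambda$ associated with $-DaG+m$ satisfies \[ \mathrm{dom}(\Lambda)=\{u_0\in\mathrm{BD}(G):(Gu_0,\pi_{\mathrm{BD}(D)}a^*Gv)_{\mathrm{BD}(D)}=0\text{ for all }v\in\ker(m^*-Da^*\mathring G)\}. \]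
   Context: $\mathring D=-G^*$, $\mathring G=-D^*$ (so $\mathring G\subset G$). Domains carry graph inner products, e.g. $(u,v)_{\mathrm{dom}(\mathring G)}=(u,v)_{H_0}+(\mathring Gu,\mathring Gv)_{H_1}$. $\mathrm{BD}(G)$ (resp. $\mathrm{BD}(D)$) is the orthogonal complement of $\mathrm{dom}(\mathring G)$ in $\mathrm{dom}(G)$ (resp. of $\mathrm{dom}(\mathring D)$ in $\mathrm{dom}(D)$) with induced inner products; $\pi_{\mathrm{BD}(G)},\pi_{\mathrm{BD}(D)}$ are the orthogonal projections. Coercive: $\mathrm{Re}(ax,x)\ge\mu\|x\|^2$ for some $\mu>0$. The Dirichlet-to-Neumann graph is $\Lambda=\{(\pi_{\mathrm{BD}(G)}u,\pi_{\mathrm{BD}(D)}aGu): u\in\mathrm{dom}(G),\ aGu\in\mathrm{dom}(D),\ mu-DaGu=0\}$ and $\mathrm{dom}(\Lambda)$ is the set of first components. $\ker(m^*-Da^*\mathring G)=\{v\in\mathrm{dom}(\mathring G):a^*\mathring Gv\in\mathrm{dom}(D),\ m^*v=Da^*\mathring Gv\}$. *)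

From HB Require Import structures.
From mathcomp Require Import all_boot all_order all_algebra.
From mathcomp Require Import reals complex.
Set Implicit Arguments. Unset Strict Implicit. Unset Printing Implicit Defensive.
Import Order.TTheory GRing.Theory Num.Theory.
Local Open Scope ring_scope.

Section Hilbert.
Variable R : realType.
Local Notation C := (R[i]).

Section Space.
Variable V : lmodType C.
Variable ip : V -> V -> C.

Definition hnorm (x : V) : C := sqrtC (ip x x).

Definition cvg_with (N : V -> C) (u : nat -> V) (x : V) : Prop :=
  forall e : C, 0 < e -> exists n0 : nat, forall n, (n0 <= n)%N -> N (u n - x) < e.

Definition cauchy_with (N : V -> C) (u : nat -> V) : Prop :=
  forall e : C, 0 < e -> exists n0 : nat,
    forall n k, (n0 <= n)%N -> (n0 <= k)%N -> N (u n - u k) < e.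

Definition is_hilbert : Prop :=
  [/\ (forall (c : C) (x y z : V), ip (c *: x + y) z = c * ip x z + ip y z),
      (forall x y : V, ip y x = (ip x y)^*),
      (forall x : V, 0 <= ip x x),
      (forall x : V, ip x x = 0 -> x = 0) &
      (forall u : nat -> V, cauchy_with hnorm u -> exists x, cvg_with hnorm u x)].

End Space.

Section Ops.
Variables (V0 V1 : lmodType C) (ip0 : V0 -> V0 -> C) (ip1 : V1 -> V1 -> C).

(* a (possibly unbounded) operator V0 -> V1 is a domain plus an action,
   the action being meaningful only on the domain *)
Definition densely_defined_closed (dom : V0 -> Prop) (A : V0 -> V1) : Prop :=
  [/\ dom 0,
      (forall (c : C) x y, dom x -> dom y -> dom (c *: x + y)),
      (forall (c : C) x y, dom x -> dom y -> A (c *: x + y) = c *: A x + A y),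
      (forall x (e : C), 0 < e -> exists y, dom y /\ hnorm ip0 (x - y) < e) &
      (forall (u : nat -> V0) x y, (forall n, dom (u n)) ->
         cvg_with (hnorm ip0) u x -> cvg_with (hnorm ip1) (fun n => A (u n)) y ->
         dom x /\ A x = y)].

Definition bounded_linear (m : V0 -> V1) : Prop :=
  (forall (c : C) x y, m (c *: x + y) = c *: m x + m y) /\
  exists K : C, 0 <= K /\ forall x, hnorm ip1 (m x) <= K * hnorm ip0 x.

Definition is_adjoint (m : V0 -> V1) (mstar : V1 -> V0) : Prop :=
  forall x y, ip1 (m x) y = ip0 x (mstar y).

Definition graph_ip (A : V0 -> V1) (x y : V0) : C := ip0 x y + ip1 (A x) (A y).
Definition graph_norm (A : V0 -> V1) (x : V0) : C := sqrtC (graph_ip A x x).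

(* domain of the adjoint A^* of (domA, A): the y for which x |-> (A x, y)
   is represented on domA by some z *)
Definition adj_dom (domA : V0 -> Prop) (A : V0 -> V1) (y : V1) : Prop :=
  exists z : V0, forall x, domA x -> ip1 (A x) y = ip0 x z.

Definition graph_orth (domA S : V0 -> Prop) (A : V0 -> V1) (u : V0) : Prop :=
  domA u /\ forall v, S v -> graph_ip A u v = 0.

Definition is_orth_proj (B : V0 -> Prop) (A : V0 -> V1) (w p : V0) : Prop :=
  B p /\ forall q, B q -> graph_ip A (w - p) q = 0.

End Ops.
End Hilbert.

(* Write u = u0 + w with u0 = pi_BD(G) u and w in dom(G_ring).  Then u solves
   m u = D a G u iff w solves the variational problem T w = -f on dom(G_ring),
   where f represents v |-> (a G u0, G v) + (m u0, v) in the graph inner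
   product (Riesz).  As ran(T) is closed it is the orthogonal complement of
   ker(T^* ), and T^* r = 0 says exactly r in ker(m^* - D a^* G_ring).  For such
   r, since G u0 lies in BD(D) with D G u0 = u0, the pairing of f with r is
   (G u0, pi_BD(D) a^* G r)_BD(D); so u exists iff these pairings vanish.
   Orthogonal projections onto the closed subspaces that occur (graphs of
   G_ring, of D on BD(D), of T on its range) exist by completeness. *)

From HB Require Import structures.
From mathcomp Require Import all_boot all_order all_algebra.
From mathcomp Require Import reals complex.
From mathcomp Require Import boolp ring lra.
Set Implicit Arguments. Unset Strict Implicit. Unset Printing Implicit Defensive.
Import Order.TTheory GRing.Theory Num.Theory.
Local Open Scope complex_scope.
Local Open Scope ring_scope.

(** * Inner product spaces *)

Section ComplexSquare.
Variable R : realType.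
Implicit Types z w : R[i].

Definition normc2 z : R := complex.Re z ^+ 2 + complex.Im z ^+ 2.

Lemma normc2_ge0 z : 0 <= normc2 z.
Proof. by rewrite addr_ge0 // sqr_ge0. Qed.

Lemma normc2_eq0 z : normc2 z = 0 -> z = 0.
Proof.
case: z => a b; rewrite /normc2 /= => h.
have -> : a = 0 by apply/eqP; rewrite -sqrf_eq0; apply/eqP; nra.
by have -> : b = 0 by apply/eqP; rewrite -sqrf_eq0; apply/eqP; nra.
Qed.

Lemma normc2D_le z w : normc2 (z + w) <= 2 * normc2 z + 2 * normc2 w.
Proof.
case: z => a b; case: w => c d; rewrite /normc2 /=.
have := sqr_ge0 (a - c); have := sqr_ge0 (b - d); nra.
Qed.

Lemma normc2_small z : (forall e : R, 0 < e -> normc2 z < e) -> z = 0.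
Proof.
move=> small; apply: normc2_eq0; apply/eqP; rewrite eq_le normc2_ge0 andbT.
by rewrite leNgt; apply/negP => /small; rewrite ltxx.
Qed.

Lemma ge0_complexE z : 0 <= z -> z = (complex.Re z)%:C.
Proof. by case: z => a b; rewrite lecE /= => /andP[/eqP -> _]. Qed.

Lemma gt0_complexE z : 0 < z -> exists2 r : R, 0 < r & z = r%:C.
Proof. by case: z => a b; rewrite ltcE /= => /andP[/eqP-> a_gt0]; exists a. Qed.

Lemma ReD z w : complex.Re (z + w) = complex.Re z + complex.Re w.
Proof. by case: z; case: w. Qed.

Lemma ReN z : complex.Re (- z) = - complex.Re z.
Proof. by case: z. Qed.

Lemma ReJ z : complex.Re z^* = complex.Re z.
Proof. by case: z. Qed.

Lemma Re_conjMr (s : R) z : complex.Re ((s%:C * z)^* * z) = s * normc2 z.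
Proof. by case: z => a b; rewrite /normc2; simpc => /=; ring. Qed.

Lemma normc2_realM (s : R) z : normc2 (s%:C * z) = s ^+ 2 * normc2 z.
Proof. by case: z => a b; rewrite /normc2; simpc => /=; ring. Qed.

End ComplexSquare.

Lemma invSn_lt (R : realType) (e : R) : 0 < e ->
  exists N, forall n, (N <= n)%N -> n.+1%:R^-1 < e.
Proof.
move=> e_gt0; have [N] := ltr_add_invr e_gt0; rewrite add0r => hN.
exists N => n le_Nn; apply: le_lt_trans hN.
by rewrite lef_pV2 ?posrE ?ltr0Sn // ler_nat ltnS.
Qed.

Section Subspace.
Variables (R : realType) (V : lmodType R[i]).

Definition subspace (M : V -> Prop) : Prop :=
  M 0 /\ forall (c : R[i]) x y, M x -> M y -> M (c *: x + y).

Variables (M : V -> Prop) (M_sub : subspace M).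

Lemma subspaceD x y : M x -> M y -> M (x + y).
Proof. by move=> Mx My; rewrite -[x]scale1r; apply: M_sub.2. Qed.

Lemma subspaceZ (c : R[i]) x : M x -> M (c *: x).
Proof. by rewrite -[c *: x]addr0 => Mx; apply: M_sub.2 Mx M_sub.1. Qed.

Lemma subspaceN x : M x -> M (- x).
Proof. by rewrite -scaleN1r; apply: subspaceZ. Qed.

Lemma subspaceB x y : M x -> M y -> M (x - y).
Proof. by move=> Mx My; apply: subspaceD Mx (subspaceN My). Qed.

End Subspace.

Section LinearOn.
Variables (R : realType) (V W : lmodType R[i]) (dom : V -> Prop) (A : V -> W).

Definition linear_on : Prop :=
  forall (c : R[i]) x y, dom x -> dom y -> A (c *: x + y) = c *: A x + A y.

Hypotheses (dom_sub : subspace dom) (A_lin : linear_on).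

Lemma linear_on0 : A 0 = 0.
Proof.
have := A_lin 1 dom_sub.1 dom_sub.1; rewrite !scale1r addr0 => A00.
by apply: (@addrI _ (A 0)); rewrite -A00 addr0.
Qed.

Lemma linear_onD x y : dom x -> dom y -> A (x + y) = A x + A y.
Proof. by move=> dx dy; have := A_lin 1 dx dy; rewrite !scale1r. Qed.

Lemma linear_onZ (c : R[i]) x : dom x -> A (c *: x) = c *: A x.
Proof. by move=> dx; have := A_lin c dx dom_sub.1; rewrite linear_on0 !addr0. Qed.

Lemma linear_onN x : dom x -> A (- x) = - A x.
Proof. by move=> dx; rewrite -scaleN1r linear_onZ // scaleN1r. Qed.

Lemma linear_onB x y : dom x -> dom y -> A (x - y) = A x - A y.
Proof.
by move=> dx dy; rewrite linear_onD ?linear_onN //; apply: subspaceN.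
Qed.

End LinearOn.

Section InnerProduct.
Variables (R : realType) (V : lmodType R[i]) (ip : V -> V -> R[i]).

Definition is_inner_product : Prop :=
  [/\ forall (c : R[i]) (x y z : V), ip (c *: x + y) z = c * ip x z + ip y z,
      forall x y : V, ip y x = (ip x y)^*,
      forall x : V, 0 <= ip x x &
      forall x : V, ip x x = 0 -> x = 0].

Definition norm2 (x : V) : R := complex.Re (ip x x).

Definition cvg_to (u : nat -> V) (x : V) : Prop :=
  forall e : R, 0 < e -> exists N, forall n, (N <= n)%N -> norm2 (u n - x) < e.

Definition cauchy_seq (u : nat -> V) : Prop :=
  forall e : R, 0 < e -> exists N, forall n k, (N <= n)%N -> (N <= k)%N ->
    norm2 (u n - u k) < e.

Definition complete_in (M : V -> Prop) : Prop :=
  forall u, (forall n, M (u n)) -> cauchy_seq u -> exists2 x, M x & cvg_to u x.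

Lemma is_hilbert_inner_product : is_hilbert ip -> is_inner_product.
Proof. by case. Qed.

Hypothesis ip_inner : is_inner_product.

Lemma ipC x y : ip y x = (ip x y)^*.
Proof. by case: ip_inner. Qed.

Lemma ipDl x y z : ip (x + y) z = ip x z + ip y z.
Proof. by case: ip_inner => ipL _ _ _; have := ipL 1 x y z; rewrite scale1r mul1r. Qed.

Lemma ip0l z : ip 0 z = 0.
Proof. by apply: (@addrI _ (ip 0 z)); rewrite -ipDl !addr0. Qed.

Lemma ipZl (c : R[i]) x z : ip (c *: x) z = c * ip x z.
Proof. by case: ip_inner => ipL _ _ _; rewrite -[c *: x]addr0 ipL ip0l addr0. Qed.

Lemma ipNl x z : ip (- x) z = - ip x z.
Proof. by rewrite -scaleN1r ipZl mulN1r. Qed.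

Lemma ipBl x y z : ip (x - y) z = ip x z - ip y z.
Proof. by rewrite ipDl ipNl. Qed.

Lemma ipDr x y z : ip z (x + y) = ip z x + ip z y.
Proof. by rewrite ipC ipDl rmorphD (ipC x z) (ipC y z). Qed.

Lemma ip0r z : ip z 0 = 0.
Proof. by rewrite ipC ip0l conjC0. Qed.

Lemma ipZr (c : R[i]) x z : ip z (c *: x) = c^* * ip z x.
Proof. by rewrite ipC ipZl rmorphM (ipC x z). Qed.

Lemma ipNr x z : ip z (- x) = - ip z x.
Proof. by rewrite ipC ipNl rmorphN (ipC x z). Qed.

Lemma ipBr x y z : ip z (x - y) = ip z x - ip z y.
Proof. by rewrite ipDr ipNr. Qed.

Lemma ip_eq0_sym x y : ip x y = 0 -> ip y x = 0.
Proof. by move=> xy0; rewrite ipC xy0 conjC0. Qed.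

Lemma ipxx x : ip x x = (norm2 x)%:C.
Proof. by case: ip_inner => _ _ ip_ge0 _; apply: ge0_complexE. Qed.

Lemma norm2_ge0 x : 0 <= norm2 x.
Proof. by rewrite -ler0c -ipxx; case: ip_inner. Qed.

Lemma norm2_eq0 x : norm2 x = 0 -> x = 0.
Proof. by case: ip_inner => _ _ _ ip_def x0; apply: ip_def; rewrite ipxx x0. Qed.

Lemma norm20 : norm2 0 = 0.
Proof. by rewrite /norm2 ip0l. Qed.

Lemma norm2N x : norm2 (- x) = norm2 x.
Proof. by rewrite /norm2 ipNl ipNr opprK. Qed.

Lemma norm2D x y : norm2 (x + y) = norm2 x + norm2 y + 2 * complex.Re (ip x y).
Proof. by rewrite /norm2 ipDl !ipDr (ipC y x) !ReD ReJ; ring. Qed.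

Lemma norm2B x y : norm2 (x - y) = norm2 x + norm2 y - 2 * complex.Re (ip x y).
Proof. by rewrite norm2D norm2N ipNr ReN; ring. Qed.

Lemma norm2Z (c : R[i]) x : norm2 (c *: x) = normc2 c * norm2 x.
Proof.
by rewrite /norm2 ipZl ipZr ipxx; case: c => a b; rewrite /normc2; simpc => /=; ring.
Qed.

Lemma parallelogram x y :
  norm2 (x + y) + norm2 (x - y) = 2 * norm2 x + 2 * norm2 y.
Proof. by rewrite norm2D norm2B; ring. Qed.

Lemma norm2_sub_proj (s : R) x y :
  norm2 (x - (s%:C * ip x y) *: y) =
  norm2 x + s ^+ 2 * normc2 (ip x y) * norm2 y - 2 * s * normc2 (ip x y).
Proof. by rewrite norm2B norm2Z ipZr normc2_realM Re_conjMr; ring. Qed.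

Lemma cauchy_schwarz x y : normc2 (ip x y) <= norm2 x * norm2 y.
Proof.
have [/norm2_eq0 ->|y_neq0] := eqVneq (norm2 y) 0.
  by rewrite ip0r norm20 mulr0 /normc2 expr0n /=; lra.
have y_gt0 : 0 < norm2 y by rewrite lt_def y_neq0 norm2_ge0.
have := norm2_ge0 (x - ((norm2 y)^-1%:C * ip x y) *: y).
rewrite norm2_sub_proj => h; have := mulr_ge0 (ltW y_gt0) h.
move: (norm2 y) y_neq0 (normc2 (ip x y)) (norm2 x) => n n_neq0 b X.
have -> : n * (X + n^-1 ^+ 2 * b * n - 2 * n^-1 * b) =
          X * n + b * (n^-1 * n) ^+ 2 - 2 * b * (n^-1 * n) by ring.
by rewrite mulVf //; lra.
Qed.

End InnerProduct.

Section Projection.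
Variables (R : realType) (V : lmodType R[i]) (ip : V -> V -> R[i]).
Hypothesis ip_inner : is_inner_product ip.
Local Notation norm2 := (norm2 ip).
Local Notation cvg_to := (cvg_to ip).

Lemma cvg_to_subl w u x : cvg_to u x -> cvg_to (fun n => w - u n) (w - x).
Proof.
move=> ux e /ux[N uxN]; exists N => n /uxN.
suff -> : w - u n - (w - x) = - (u n - x) by rewrite (norm2N ip_inner).
by rewrite [w - _]addrC addrKA opprK opprB addrC.
Qed.

Lemma ip_lim_eq0 u x y : cvg_to u x ->
  (forall e : R, 0 < e -> exists N, forall n, (N <= n)%N -> normc2 (ip (u n) y) < e) ->
  ip x y = 0.
Proof.
move=> ux uy; apply: normc2_small => e e_gt0.
have y1_gt0 : 0 < norm2 y + 1 by have := norm2_ge0 ip_inner y; lra.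
have y4_gt0 : 0 < 4 * (norm2 y + 1) by rewrite mulr_gt0.
have [N1 uxN] := ux _ (divr_gt0 e_gt0 y4_gt0).
have [N2 uyN] : exists N, forall n, (N <= n)%N -> normc2 (ip (u n) y) < e / 4.
  by apply: uy; rewrite divr_gt0.
pose n := maxn N1 N2.
have {uxN} : norm2 (u n - x) * (4 * (norm2 y + 1)) < e.
  by rewrite -ltr_pdivlMr ?mulr_gt0 // uxN ?leq_maxl.
have {uyN} := uyN n (leq_maxr _ _).
have := cauchy_schwarz ip_inner (x - u n) y; rewrite -(norm2N ip_inner) opprB.
have := normc2D_le (ip (u n) y) (ip (x - u n) y); rewrite -(ipDl ip_inner) addrC subrK.
have := norm2_ge0 ip_inner (u n - x); have := norm2_ge0 ip_inner y.
have := normc2_ge0 (ip (u n) y).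
move: (normc2 _) (normc2 _) (normc2 _) (norm2 _) (norm2 _) => a b c d f.
nra.
Qed.

Lemma ip_lim_orth u x y : cvg_to u x -> (forall n, ip (u n) y = 0) -> ip x y = 0.
Proof.
move=> ux uy0; apply: ip_lim_eq0 ux _ => e e_gt0; exists 0%N => n _.
by rewrite uy0 /normc2 /= expr0n /= addr0.
Qed.

Lemma near_min_ip x q (e : R) :
  (forall c : R[i], norm2 x <= norm2 (x - c *: q) + e) ->
  normc2 (ip x q) <= e * (norm2 q + 1).
Proof.
move=> near_min; have q_ge0 := norm2_ge0 ip_inner q.
have q1_gt0 : 0 < norm2 q + 1 by lra.
pose s := (norm2 q + 1)^-1.
have s_gt0 : 0 < s by rewrite invr_gt0.
have sq1 : s * (norm2 q + 1) = 1 by rewrite mulVf ?gt_eqF.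
have := near_min (s%:C * ip x q); rewrite (norm2_sub_proj ip_inner).
have -> : s ^+ 2 * normc2 (ip x q) * norm2 q = s * normc2 (ip x q) * (s * norm2 q).
  by ring.
have -> : s * norm2 q = 1 - s by rewrite -sq1; ring.
have := normc2_ge0 (ip x q); move: (normc2 _) (norm2 x) => b X b_ge0 h.
have s2b_ge0 : 0 <= s * s * b by rewrite !mulr_ge0 // ltW.
rewrite -[b]mul1r -{1}sq1 mulrAC ler_pM2r //; nra.
Qed.

Lemma minimizing_cauchy (M : V -> Prop) w (d : R) (ms : nat -> V) : subspace M ->
  (forall m, M m -> d <= norm2 (w - m)) -> (forall n, M (ms n)) ->
  (forall n, norm2 (w - ms n) < d + n.+1%:R^-1) -> cauchy_seq ip ms.
Proof.
move=> M_sub d_le Mms ms_min e e_gt0.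
have e4_gt0 : 0 < e / 4 by rewrite divr_gt0.
have [N HN] := invSn_lt e4_gt0.
exists N => n k le_Nn le_Nk.
have mid_ge : 4 * d <= norm2 ((w - ms k) + (w - ms n)).
  have -> : (w - ms k) + (w - ms n) = 2%:R *: (w - 2%:R^-1 *: (ms k + ms n)).
    rewrite scalerBr scalerA mulfV ?pnatr_eq0 // scale1r scaler_nat mulr2n.
    by rewrite opprD addrACA.
  rewrite (norm2Z ip_inner) (_ : normc2 _ = 4); last by rewrite /normc2 /=; ring.
  rewrite ler_pM2l //; exact/d_le/(subspaceZ M_sub)/(subspaceD M_sub).
have -> : ms n - ms k = (w - ms k) - (w - ms n).
  by rewrite [w - ms k]addrC addrKA opprK addrC.
have := parallelogram ip_inner (w - ms k) (w - ms n).
have := HN n le_Nn; have := HN k le_Nk; have := ms_min n; have := ms_min k.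
(* lra compares atoms syntactically: generalizing merges the copies that differ
   only in their canonical instances *)
move: (norm2 (w - ms k + (w - ms n))) (norm2 (w - ms k - (w - ms n))) mid_ge.
move: (norm2 (w - ms k)) (norm2 (w - ms n)) (k.+1%:R^-1) (n.+1%:R^-1).
by move=> X Y ek en S Dif; lra.
Qed.

Theorem orth_proj_exists (M : V -> Prop) : subspace M -> complete_in ip M ->
  forall w, exists2 p, M p & forall q, M q -> ip (w - p) q = 0.
Proof.
move=> M_sub M_cmp w.
pose E : classical_sets.set R := fun r => exists2 m, M m & r = norm2 (w - m).
have E_inf : classical_sets.has_inf E.
  split; first by exists (norm2 (w - 0)), 0 => //; exact: M_sub.1.
  by exists 0 => _ [m _ ->]; apply: norm2_ge0.
have d_le m : M m -> inf E <= norm2 (w - m).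
  by move=> Mm; apply: (ge_inf E_inf.2); exists m.
have near_inf n : exists m, M m /\ norm2 (w - m) < inf E + n.+1%:R^-1.
  have n1_gt0 : 0 < n.+1%:R^-1 :> R by rewrite invr_gt0.
  by have [_ [m Mm ->] ?] := inf_adherent n1_gt0 E_inf; exists m.
have [ms ms_min] := choice near_inf.
have Mms n : M (ms n) by case: (ms_min n).
have [p Mp ms_p] := M_cmp ms Mms
  (minimizing_cauchy M_sub d_le Mms (fun n => (ms_min n).2)).
exists p => // q Mq; apply: ip_lim_eq0 (cvg_to_subl w ms_p) _ => e e_gt0.
have q1_gt0 : 0 < norm2 q + 1 by have := norm2_ge0 ip_inner q; lra.
have [N HN] := invSn_lt (divr_gt0 e_gt0 q1_gt0).
exists N => n /HN; rewrite ltr_pdivlMr // => small.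
apply: le_lt_trans small; apply: near_min_ip => c.
have := d_le _ (M_sub.2 c _ _ Mq (Mms n)); have := (ms_min n).2.
have -> : w - (c *: q + ms n) = w - ms n - c *: q by rewrite opprD addrA addrAC.
by move: (n.+1%:R^-1) => en; lra.
Qed.

End Projection.

Section HilbertNorm.
Variables (R : realType) (V : lmodType R[i]) (ip : V -> V -> R[i]).
Hypothesis ip_inner : is_inner_product ip.

Lemma hnorm_ltR x (e : R) : 0 < e -> (hnorm ip x < e%:C) = (norm2 ip x < e ^+ 2).
Proof.
move=> e_gt0; have ipxx_ge0 : 0 <= ip x x by case: ip_inner.
rewrite /hnorm -(@ltr_pXn2r _ 2) ?qualifE /= ?sqrtC_ge0 ?ler0c ?(ltW e_gt0) //.
by rewrite sqrtCK (ipxx ip_inner) -rmorphXn ltcR.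
Qed.

Lemma cvg_withE u x : cvg_with (hnorm ip) u x <-> cvg_to ip u x.
Proof.
split=> [ux e e_gt0 | ux _ /gt0_complexE[e e_gt0 ->]].
- have se_gt0 : 0 < Num.sqrt e by rewrite sqrtr_gt0.
  have [N uxN] := ux _ (eqbRL (ltcR 0 _) se_gt0).
  by exists N => n /uxN; rewrite hnorm_ltR // sqr_sqrtr // ltW.
- have [N uxN] := ux _ (exprn_gt0 2 e_gt0).
  by exists N => n /uxN; rewrite hnorm_ltR.
Qed.

Lemma cauchy_withE u : cauchy_with (hnorm ip) u <-> cauchy_seq ip u.
Proof.
split=> [uc e e_gt0 | uc _ /gt0_complexE[e e_gt0 ->]].
- have se_gt0 : 0 < Num.sqrt e by rewrite sqrtr_gt0.
  have [N ucN] := uc _ (eqbRL (ltcR 0 _) se_gt0).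
  by exists N => n k /ucN /[apply]; rewrite hnorm_ltR // sqr_sqrtr // ltW.
- have [N ucN] := uc _ (exprn_gt0 2 e_gt0).
  by exists N => n k /ucN /[apply]; rewrite hnorm_ltR.
Qed.

End HilbertNorm.

Lemma is_hilbert_complete (R : realType) (V : lmodType R[i]) (ip : V -> V -> R[i]) :
  is_hilbert ip -> complete_in ip (fun _ => True).
Proof.
move=> ipH; have ip_inner := is_hilbert_inner_product ipH.
case: ipH => _ _ _ _ ip_cmp u _ /(cauchy_withE ip_inner) /ip_cmp[x ux].
by exists x => //; apply/(cvg_withE ip_inner).
Qed.

Lemma complete_in_sub (R : realType) (V : lmodType R[i]) (ip : V -> V -> R[i])
    (M N : V -> Prop) :
  complete_in ip N -> (forall x, M x -> N x) ->
  (forall u x, (forall n, M (u n)) -> N x -> cvg_to ip u x -> M x) ->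
  complete_in ip M.
Proof.
move=> N_cmp MN M_closed u Mu /(N_cmp u (fun n => MN _ (Mu n)))[x Nx ux].
by exists x => //; apply: M_closed Mu Nx ux.
Qed.

(** * Graphs of operators *)

Section Product.
Variables (R : realType) (V0 V1 : lmodType R[i]).
Variables (ip0 : V0 -> V0 -> R[i]) (ip1 : V1 -> V1 -> R[i]).

Definition prod_ip (x y : V0 * V1) : R[i] := ip0 x.1 y.1 + ip1 x.2 y.2.

Hypotheses (ip0_inner : is_inner_product ip0) (ip1_inner : is_inner_product ip1).

Lemma norm2_prod x : norm2 prod_ip x = norm2 ip0 x.1 + norm2 ip1 x.2.
Proof. exact: ReD. Qed.

Lemma prod_inner_product : is_inner_product prod_ip.
Proof.
case: ip0_inner ip1_inner => ip0L ip0C ip0_ge0 ip0_def [ip1L ip1C ip1_ge0 ip1_def].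
split=> [c x y z | x y | x | [x0 x1] xx0]; rewrite /prod_ip /=.
- by rewrite ip0L ip1L; ring.
- by rewrite rmorphD (ip0C x.1) (ip1C x.2).
- exact: addr_ge0 (ip0_ge0 _) (ip1_ge0 _).
have := norm2_ge0 ip0_inner x0; have := norm2_ge0 ip1_inner x1.
have : norm2 prod_ip (x0, x1) = 0 by rewrite /norm2 xx0.
rewrite norm2_prod /= => n01 n1_ge0 n0_ge0.
have n0 : norm2 ip0 x0 = 0 by lra.
have n1 : norm2 ip1 x1 = 0 by lra.
by rewrite (norm2_eq0 ip0_inner n0) (norm2_eq0 ip1_inner n1).
Qed.

Lemma cvg_to_fst u p : cvg_to prod_ip u p -> cvg_to ip0 (fun n => (u n).1) p.1.
Proof.
move=> up e /up[N upN]; exists N => n /upN; rewrite norm2_prod /=.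
by have := norm2_ge0 ip1_inner ((u n).2 - p.2); lra.
Qed.

Lemma cvg_to_snd u p : cvg_to prod_ip u p -> cvg_to ip1 (fun n => (u n).2) p.2.
Proof.
move=> up e /up[N upN]; exists N => n /upN; rewrite norm2_prod /=.
by have := norm2_ge0 ip0_inner ((u n).1 - p.1); lra.
Qed.

Lemma prod_complete :
  complete_in ip0 (fun _ => True) -> complete_in ip1 (fun _ => True) ->
  complete_in prod_ip (fun _ => True).
Proof.
move=> cmp0 cmp1 u _ uc.
have [x _ ux] : exists2 x, True & cvg_to ip0 (fun n => (u n).1) x.
  apply: cmp0 => // e /uc[N ucN]; exists N => n k /ucN /[apply].
  by rewrite norm2_prod /=; have := norm2_ge0 ip1_inner ((u n).2 - (u k).2); lra.
have [y _ uy] : exists2 y, True & cvg_to ip1 (fun n => (u n).2) y.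
  apply: cmp1 => // e /uc[N ucN]; exists N => n k /ucN /[apply].
  by rewrite norm2_prod /=; have := norm2_ge0 ip0_inner ((u n).1 - (u k).1); lra.
exists (x, y) => // e e_gt0.
have [N1 uxN] := ux _ (divr_gt0 e_gt0 (ltr0Sn R 1)).
have [N2 uyN] := uy _ (divr_gt0 e_gt0 (ltr0Sn R 1)).
exists (maxn N1 N2) => n; rewrite geq_max => /andP[/uxN ? /uyN ?].
by rewrite norm2_prod /=; lra.
Qed.

End Product.

Section Graph.
Variables (R : realType) (V0 V1 : lmodType R[i]).
Variables (ip0 : V0 -> V0 -> R[i]) (ip1 : V1 -> V1 -> R[i]).
Hypotheses (ip0_inner : is_inner_product ip0) (ip1_inner : is_inner_product ip1).
Variables (dom : V0 -> Prop) (A : V0 -> V1).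
Hypotheses (dom_sub : subspace dom) (A_lin : linear_on dom A).

Definition graph (B : V0 -> Prop) (p : V0 * V1) : Prop := B p.1 /\ p.2 = A p.1.

Local Notation gip := (graph_ip ip0 ip1 A).
Local Notation pip := (prod_ip ip0 ip1).
Let pip_inner := prod_inner_product ip0_inner ip1_inner.

Lemma graph_ip_eq0_sym x y : gip x y = 0 -> gip y x = 0.
Proof. exact: (ip_eq0_sym pip_inner (x := (x, A x)) (y := (y, A y))). Qed.

Lemma graph_ipL (c : R[i]) x y v : dom x -> dom y ->
  gip (c *: x + y) v = c * gip x v + gip y v.
Proof.
move=> dx dy; rewrite /graph_ip A_lin //.
by case: ip0_inner ip1_inner => ip0L _ _ _ [ip1L _ _ _]; rewrite ip0L ip1L; ring.
Qed.

Lemma graph_ipB x y v : dom x -> dom y -> gip (x - y) v = gip x v - gip y v.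
Proof.
move=> dx dy; rewrite /graph_ip (linear_onB dom_sub A_lin) // (ipBl ip0_inner) (ipBl ip1_inner).
by rewrite addrACA opprD.
Qed.

Lemma graph_ipBr v x y : dom x -> dom y -> gip v (x - y) = gip v x - gip v y.
Proof.
move=> dx dy; rewrite /graph_ip (linear_onB dom_sub A_lin) // (ipBr ip0_inner).
by rewrite (ipBr ip1_inner) addrACA opprD.
Qed.

Lemma graph_ipN x v : dom x -> gip (- x) v = - gip x v.
Proof.
move=> dx; rewrite /graph_ip (linear_onN dom_sub A_lin) // (ipNl ip0_inner).
by rewrite (ipNl ip1_inner) opprD.
Qed.

Lemma graph_ip_eq0 x : gip x x = 0 -> x = 0.
Proof. by case: pip_inner => _ _ _ pip_def /(pip_def (x, A x))/(congr1 fst). Qed.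

Lemma graph_subspace B : subspace B -> (forall x, B x -> dom x) -> subspace (graph B).
Proof.
move=> [B0 Blin] Bdom; split; first by split; rewrite //= (linear_on0 dom_sub A_lin).
move=> c [x1 _] [y1 _] [/= Bx ->] [/= By ->]; split; first exact: Blin.
by rewrite /= A_lin //; apply: Bdom.
Qed.

Lemma graph_orth_subspace E S : subspace E -> (forall x, E x -> dom x) ->
  subspace (graph_orth ip0 ip1 E S A).
Proof.
move=> E_sub Edom; split.
  split=> [|v _]; first exact: E_sub.1.
  by rewrite /graph_ip (linear_on0 dom_sub A_lin) (ip0l ip0_inner) (ip0l ip1_inner) addr0.
move=> c x y [Ex x_orth] [Ey y_orth]; split; first exact: E_sub.2.
by move=> v Sv; rewrite graph_ipL ?x_orth ?y_orth ?mulr0 ?addr0 //; apply: Edom.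
Qed.

Lemma graph_complete_sub (E B : V0 -> Prop) :
  complete_in pip (graph E) -> (forall x, B x -> E x) ->
  (forall u x, (forall n, B (u n)) -> E x ->
     cvg_to pip (fun n => (u n, A (u n))) (x, A x) -> B x) ->
  complete_in pip (graph B).
Proof.
move=> E_cmp BE B_closed; apply: complete_in_sub E_cmp _ _.
  by move=> [x y] [/BE]; split.
move=> u [x y] Bu [/= Ex ->] ux; split => //=.
have u_graph : (fun n => ((u n).1, A (u n).1)) = u.
  by rewrite funeqE => n; case: (u n) (Bu n) => ? ? [_ /= ->].
apply: (B_closed (fun n => (u n).1)) => //; first by move=> n; case: (Bu n).
by rewrite u_graph.
Qed.

Lemma graph_orth_proj B w : subspace B -> (forall x, B x -> dom x) ->
  complete_in pip (graph B) -> dom w -> exists p, is_orth_proj ip0 ip1 B A w p.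
Proof.
move=> B_sub Bdom B_cmp dw.
have [[p _] [/= Bp ->] wp] :=
  orth_proj_exists pip_inner (graph_subspace B_sub Bdom) B_cmp (w, A w).
exists p; split => // q Bq; have := wp (q, A q) (conj Bq erefl).
by rewrite /graph_ip (linear_onB dom_sub A_lin dw (Bdom _ Bp)).
Qed.

Lemma orth_proj_ip B w p b : (forall x, B x -> dom x) -> dom w ->
  is_orth_proj ip0 ip1 B A w p -> B b -> gip b p = gip b w.
Proof.
move=> Bdom dw [Bp wp] Bb; have := graph_ip_eq0_sym (wp b Bb).
by rewrite (graph_ipBr _ dw (Bdom _ Bp)) => /eqP; rewrite subr_eq0 eq_sym => /eqP.
Qed.

Lemma graph_orthK (E B : V0 -> Prop) w : subspace E -> subspace B ->
  (forall x, B x -> E x) -> (forall x, E x -> dom x) -> complete_in pip (graph B) ->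
  E w -> (forall b, graph_orth ip0 ip1 E B A b -> gip w b = 0) -> B w.
Proof.
move=> E_sub B_sub BE Edom B_cmp Ew w_orth.
have Bdom x : B x -> dom x by move/BE/Edom.
have [p [Bp wp]] := graph_orth_proj B_sub Bdom B_cmp (Edom _ Ew).
have wp_orth : graph_orth ip0 ip1 E B A (w - p) by split=> //; apply: subspaceB (BE _ Bp).
have : gip (w - p) (w - p) = 0.
  rewrite (graph_ipB _ (Edom _ Ew) (Bdom _ Bp)) w_orth //.
  by rewrite graph_ip_eq0_sym ?subrr // wp.
by move/graph_ip_eq0/eqP; rewrite subr_eq0 => /eqP ->.
Qed.

Lemma graph_riesz B y : subspace B -> (forall x, B x -> dom x) ->
  complete_in pip (graph B) ->
  exists2 f, B f & forall w, B w -> pip y (w, A w) = gip f w.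
Proof.
move=> B_sub Bdom B_cmp.
have [[f _] [/= Bf ->] yf] := orth_proj_exists pip_inner (graph_subspace B_sub Bdom) B_cmp y.
exists f => // w Bw; have := yf (w, A w) (conj Bw erefl).
by rewrite (ipBl pip_inner) => /eqP; rewrite subr_eq0 => /eqP.
Qed.

Lemma cvg_graphE u x : (forall n, dom (u n)) -> dom x ->
  cvg_with (graph_norm ip0 ip1 A) u x <-> cvg_to pip (fun n => (u n, A (u n))) (x, A x).
Proof.
move=> du dx; rewrite -(cvg_withE pip_inner).
split=> ux e /ux[N uxN]; exists N => n /uxN;
  by rewrite /graph_norm /graph_ip (linear_onB dom_sub A_lin).
Qed.

Lemma graph_orth_complete E S :
  complete_in pip (graph E) -> complete_in pip (graph (graph_orth ip0 ip1 E S A)).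
Proof.
move=> E_cmp; apply: graph_complete_sub E_cmp _ _ => [x [] // | u x Bu Ex ux].
by split=> // v Sv; apply: (ip_lim_orth (y := (v, A v)) pip_inner ux) => n; apply: (Bu n).2.
Qed.

End Graph.

Section ClosedOperator.
Variables (R : realType) (V0 V1 : lmodType R[i]).
Variables (ip0 : V0 -> V0 -> R[i]) (ip1 : V1 -> V1 -> R[i]).
Hypotheses (ip0_inner : is_inner_product ip0) (ip1_inner : is_inner_product ip1).
Hypotheses (ip0_cmp : complete_in ip0 (fun _ => True))
           (ip1_cmp : complete_in ip1 (fun _ => True)).
Variables (dom : V0 -> Prop) (A : V0 -> V1).
Hypotheses (dom_sub : subspace dom) (A_lin : linear_on dom A).
Hypothesis A_closed : forall (u : nat -> V0) x y, (forall n, dom (u n)) ->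
  cvg_with (hnorm ip0) u x -> cvg_with (hnorm ip1) (fun n => A (u n)) y ->
  dom x /\ A x = y.

Local Notation pip := (prod_ip ip0 ip1).
Let pip_inner := prod_inner_product ip0_inner ip1_inner.

Lemma graph_dom_complete : complete_in pip (graph A dom).
Proof.
apply: complete_in_sub (prod_complete ip0_inner ip1_inner ip0_cmp ip1_cmp) _ _ => //.
move=> u [x y] Gu _ ux.
have uA : (fun n => (u n).2) = (fun n => A (u n).1).
  by rewrite funeqE => n; case: (Gu n).
have := cvg_to_snd ip0_inner ux; rewrite uA /= => /(cvg_withE ip1_inner) uy.
have /(cvg_withE ip0_inner) u1x := cvg_to_fst ip1_inner ux.
by case: (A_closed (fun n => (Gu n).1) u1x uy) => /= dx <-.
Qed.

(* a closed operator coincides with its second adjoint *)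
Lemma closed_biadjoint x z :
  (forall y w, (forall x', dom x' -> ip1 (A x') y = ip0 x' w) -> ip1 z y = ip0 x w) ->
  dom x /\ A x = z.
Proof.
move=> adj_adj.
have [[p _] [/= dp ->] xzp] := orth_proj_exists pip_inner
  (graph_subspace dom_sub A_lin dom_sub (fun _ => id)) graph_dom_complete (x, z).
have res_adj x' : dom x' -> ip1 (A x') (z - A p) = ip0 x' (- (x - p)).
  move=> dx'; have := xzp (x', A x') (conj dx' erefl); rewrite /prod_ip /= => /eqP.
  rewrite addrC addr_eq0 => /eqP res_orth.
  by rewrite (ipC ip1_inner (z - A p)) res_orth rmorphN (ipNr ip0_inner) (ipC ip0_inner (x - p)).
have : ip1 (z - A p) (z - A p) = - ip0 (x - p) (x - p).
  rewrite [in LHS](ipBl ip1_inner) (adj_adj _ _ res_adj) (res_adj _ dp) -(ipBl ip0_inner).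
  exact: (ipNr ip0_inner).
rewrite (ipxx ip1_inner) (ipxx ip0_inner) => /(congr1 (@complex.Re R)); rewrite ReN /= => res_norm.
have := norm2_ge0 ip0_inner (x - p); have := norm2_ge0 ip1_inner (z - A p).
move=> z_ge0 x_ge0.
have /(norm2_eq0 ip0_inner)/eqP : norm2 ip0 (x - p) = 0 by lra.
have /(norm2_eq0 ip1_inner)/eqP : norm2 ip1 (z - A p) = 0 by lra.
by rewrite !subr_eq0 => /eqP-> /eqP->.
Qed.

End ClosedOperator.

(** * The domain of the Dirichlet-to-Neumann graph *)

Section DirichletToNeumann.
Variables (R : realType) (V0 V1 : lmodType R[i]).
Variables (ip0 : V0 -> V0 -> R[i]) (ip1 : V1 -> V1 -> R[i]).
Hypotheses (HH0 : is_hilbert ip0) (HH1 : is_hilbert ip1).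
Variables (domG : V0 -> Prop) (G : V0 -> V1) (domD : V1 -> Prop) (D : V1 -> V0).
Hypotheses (HG : densely_defined_closed ip0 ip1 domG G)
           (HD : densely_defined_closed ip1 ip0 domD D).
Hypothesis HGD : forall y z,
  (forall x, domG x -> ip1 (G x) y = ip0 x z) -> domD y /\ D y = - z.
Variables (m mstar : V0 -> V0) (a astar : V1 -> V1).
Hypotheses (m_lin : linear_on (fun _ => True) m) (a_lin : linear_on (fun _ => True) a).
Hypotheses (Hmstar : is_adjoint ip0 ip0 m mstar) (Hastar : is_adjoint ip1 ip1 a astar).

Local Notation domGo := (adj_dom ip1 ip0 domD D).
Local Notation domDo := (adj_dom ip0 ip1 domG G).
Local Notation BDG := (graph_orth ip0 ip1 domG domGo G).
Local Notation BDD := (graph_orth ip1 ip0 domD domDo D).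
Local Notation kerK v := [/\ domGo v, domD (astar (G v)) & mstar v = D (astar (G v))].
Local Notation gipG := (graph_ip ip0 ip1 G).
Local Notation gipD := (graph_ip ip1 ip0 D).
Local Notation pip := (prod_ip ip0 ip1).

Let ip0_inner := is_hilbert_inner_product HH0.
Let ip1_inner := is_hilbert_inner_product HH1.
Let pip_inner := prod_inner_product ip0_inner ip1_inner.
Let ip0_cmp := is_hilbert_complete HH0.
Let ip1_cmp := is_hilbert_complete HH1.
Let domG_sub : subspace domG. Proof. by case: HG. Qed.
Let G_lin : linear_on domG G. Proof. by case: HG. Qed.
Let domD_sub : subspace domD. Proof. by case: HD. Qed.
Let D_lin : linear_on domD D. Proof. by case: HD. Qed.
Let G_closed := let: And5 _ _ _ _ G_closed := HG in G_closed.
Let D_closed := let: And5 _ _ _ _ D_closed := HD in D_closed.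
Let G_biadj := closed_biadjoint ip0_inner ip1_inner ip0_cmp ip1_cmp domG_sub G_lin G_closed.
Let D_biadj := closed_biadjoint ip1_inner ip0_inner ip1_cmp ip0_cmp domD_sub D_lin D_closed.

Definition weak_form (x v : V0) : R[i] := ip1 (a (G x)) (G v) + ip0 (m x) v.

Lemma adj_dom_G v z : (forall x, domD x -> ip0 (D x) v = ip1 x z) ->
  domG v /\ G v = - z.
Proof.
move=> vz; apply: G_biadj => y w yw; have [dy Dy] := HGD yw.
have := vz y dy; rewrite Dy (ipNl ip0_inner) => wvz.
by rewrite (ipNl ip1_inner) (ipC ip1_inner y) -wvz rmorphN opprK (ipC ip0_inner w).
Qed.

Lemma domGo_domG v : domGo v -> domG v.
Proof. by case=> z /adj_dom_G[]. Qed.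

Lemma domGo_D v x : domGo v -> domD x -> ip0 (D x) v = - ip1 x (G v).
Proof.
by case=> z vz dx; have [_ ->] := adj_dom_G vz; rewrite (ipNr ip1_inner) opprK vz.
Qed.

Lemma domGo_sub : subspace domGo.
Proof.
split; first by exists 0 => x _; rewrite (ip0r ip0_inner) (ip0r ip1_inner).
move=> c x y [zx xz] [zy yz]; exists (c *: zx + zy) => x' dx'.
by rewrite (ipDr ip0_inner) (ipZr ip0_inner) xz // yz // (ipDr ip1_inner) (ipZr ip1_inner).
Qed.

Lemma domD_of_orth x z :
  (forall v, domGo v -> ip1 x (G v) + ip0 z v = 0) -> domD x /\ D x = z.
Proof.
move=> xz_orth; apply: D_biadj => y w yw.
have [_ Gy] := adj_dom_G yw.
have /eqP := xz_orth y (ex_intro _ w yw).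
by rewrite Gy (ipNr ip1_inner) addrC subr_eq0 => /eqP.
Qed.

Lemma BDG_D u0 : BDG u0 -> domD (G u0) /\ D (G u0) = u0.
Proof. by case=> _ u0_orth; apply: domD_of_orth => v dv; rewrite addrC; apply: u0_orth. Qed.

Lemma BDG_BDD u0 : BDG u0 -> BDD (G u0).
Proof.
move=> BDGu0; have [dGu0 DGu0] := BDG_D BDGu0; split => // y [z yz].
have [_ Dy] := HGD yz; rewrite /graph_ip DGu0 Dy (ipNr ip0_inner) -yz ?subrr //.
by case: BDGu0.
Qed.

Lemma graph_domGo_complete : complete_in pip (graph G domGo).
Proof.
apply: graph_complete_sub
  (graph_dom_complete ip0_inner ip1_inner ip0_cmp ip1_cmp G_closed) domGo_domG _.
move=> u x du dx ux; exists (- G x) => y dy.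
have u_orth n : pip (u n, G (u n)) (D y, y) = 0.
  apply: (ip_eq0_sym pip_inner (x := (D y, y))).
  by rewrite /prod_ip /= (domGo_D (du n) dy) addNr.
have /(ip_eq0_sym pip_inner)/eqP := ip_lim_orth pip_inner ux u_orth.
by rewrite /prod_ip /= addr_eq0 (ipNr ip1_inner) => /eqP.
Qed.

Let BDD_domD y : BDD y -> domD y. Proof. by case. Qed.

Lemma graph_BDD_complete : complete_in (prod_ip ip1 ip0) (graph D BDD).
Proof.
exact/graph_orth_complete/(graph_dom_complete ip1_inner ip0_inner ip1_cmp ip0_cmp D_closed).
Qed.

Lemma weak_formL (c : R[i]) x y v : domG x -> domG y ->
  weak_form (c *: x + y) v = c * weak_form x v + weak_form y v.
Proof.
move=> dx dy; rewrite /weak_form G_lin // a_lin // m_lin //.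
case: ip0_inner ip1_inner => ip0L _ _ _ [ip1L _ _ _].
by rewrite ip0L ip1L; ring.
Qed.

Lemma weak_formD x y v : domG x -> domG y ->
  weak_form (x + y) v = weak_form x v + weak_form y v.
Proof. by move=> dx dy; have := weak_formL 1 v dx dy; rewrite scale1r mul1r. Qed.

Lemma weak_formB x y v : domG x -> domG y ->
  weak_form (x - y) v = weak_form x v - weak_form y v.
Proof.
by move=> dx dy; rewrite addrC -scaleN1r weak_formL // mulN1r addrC.
Qed.

Lemma weak_form_solution u v : domD (a (G u)) -> m u = D (a (G u)) -> domGo v ->
  weak_form u v = 0.
Proof. by move=> daGu mu dv; rewrite /weak_form mu (domGo_D dv daGu) addrN. Qed.

Lemma weak_form_ker w v : domGo w -> kerK v -> weak_form w v = 0.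
Proof.
move=> dw [dv dK mK]; rewrite /weak_form Hastar Hmstar mK (ipC ip0_inner (D _) w).
by rewrite (domGo_D dw dK) rmorphN (ipC ip1_inner _ (G w)) addrN.
Qed.

Lemma kerK_of_orth r : domGo r -> (forall v, domGo v -> weak_form v r = 0) -> kerK r.
Proof.
move=> dr r_orth; suff [? ?] : domD (astar (G r)) /\ D (astar (G r)) = mstar r by [].
apply: domD_of_orth => v dv; rewrite addrC.
apply: (ip_eq0_sym pip_inner (x := (v, G v)) (y := (mstar r, astar (G r)))).
by rewrite /prod_ip /= -Hastar -Hmstar addrC; apply: r_orth.
Qed.

Lemma BDD_proj_form u0 v p : BDG u0 -> kerK v ->
  is_orth_proj ip1 ip0 BDD D (astar (G v)) p -> gipD (G u0) p = weak_form u0 v.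
Proof.
move=> BDGu0 [dv dK mK] proj_p.
rewrite (orth_proj_ip ip1_inner ip0_inner domD_sub D_lin BDD_domD dK proj_p (BDG_BDD BDGu0)).
by rewrite /graph_ip (BDG_D BDGu0).2 -mK -Hastar -Hmstar.
Qed.

Lemma dtn_dom_orth u u0 v p : domG u -> domD (a (G u)) -> m u - D (a (G u)) = 0 ->
  is_orth_proj ip0 ip1 BDG G u u0 -> kerK v ->
  is_orth_proj ip1 ip0 BDD D (astar (G v)) p -> gipD (G u0) p = 0.
Proof.
move=> du daGu /eqP; rewrite subr_eq0 => /eqP mu [BDGu0 uu0] Kv proj_p.
have du0 : domG u0 by case: BDGu0.
have dv : domGo v by case: Kv.
have dw : domGo (u - u0).
  exact: (graph_orthK ip0_inner ip1_inner domG_sub G_lin domG_sub domGo_sub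
    domGo_domG (fun _ => id) graph_domGo_complete (subspaceB domG_sub du du0) uu0).
rewrite (BDD_proj_form BDGu0 Kv proj_p) -[u0](subKr u) weak_formB //.
  by rewrite (weak_form_solution daGu mu dv) (weak_form_ker dw Kv) subrr.
exact: subspaceB.
Qed.

Variable T : V0 -> V0.
Hypothesis HTdom : forall u, domGo u -> domGo (T u).
Hypothesis HTdef : forall u v, domGo u -> domGo v -> gipG (T u) v = weak_form u v.
Hypothesis HTran : forall (un : nat -> V0) (y : V0),
  (forall n, domGo (un n)) -> domGo y ->
  cvg_with (graph_norm ip0 ip1 G) (fun n => T (un n)) y -> exists u, domGo u /\ T u = y.

Local Notation ranT := (fun y => exists2 u, domGo u & y = T u).

Lemma T_lin : linear_on domGo T.
Proof.
move=> c x y dx dy.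
have dxy : domGo (c *: x + y) by apply: domGo_sub.2.
have dTxy : domGo (c *: T x + T y) by apply: domGo_sub.2; apply: HTdom.
have dT u : domGo u -> domG (T u) by move/HTdom/domGo_domG.
apply/eqP; rewrite -subr_eq0; apply/eqP/(graph_ip_eq0 ip0_inner ip1_inner (A := G)).
have dd := subspaceB domGo_sub (HTdom dxy) dTxy.
rewrite (graph_ipB ip0_inner ip1_inner domG_sub G_lin _ (dT _ dxy) (domGo_domG dTxy)).
rewrite (graph_ipL ip0_inner ip1_inner G_lin _ _ (dT _ dx) (dT _ dy)) !HTdef //.
by rewrite weak_formL ?subrr //; apply: domGo_domG.
Qed.

Lemma ranT_sub : subspace ranT.
Proof.
split; first by exists 0; [exact: domGo_sub.1 | rewrite (linear_on0 domGo_sub T_lin)].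
move=> c _ _ [x dx ->] [y dy ->]; exists (c *: x + y); first exact: domGo_sub.2.
by rewrite T_lin.
Qed.

Lemma ranT_complete : complete_in pip (graph G ranT).
Proof.
apply: graph_complete_sub graph_domGo_complete _ _ => [_ [u du ->] | yn y ranyn dy yny].
  exact: HTdom.
have un_ex n : exists u, domGo u /\ yn n = T u by have [u du ->] := ranyn n; exists u.
have [un unP] := choice un_ex.
have dyn n : domG (yn n) by case: (ranyn n) => u du ->; exact/domGo_domG/HTdom.
have /(cvg_graphE ip0_inner ip1_inner domG_sub G_lin dyn (domGo_domG dy)) := yny.
have -> : yn = (fun n => T (un n)) by rewrite funeqE => n; case: (unP n).
by case/(HTran (fun n => (unP n).1) dy) => u [du <-]; exists u.
Qed.

(* closed range theorem: ran T is the orthogonal complement of ker T^*,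
   which [kerK_of_orth] identifies with ker(m^* - D a^* G_ring) *)
Lemma ranT_of_orth f : domGo f -> (forall r, kerK r -> gipG f r = 0) -> ranT f.
Proof.
move=> df f_orth.
apply: (graph_orthK ip0_inner ip1_inner domG_sub G_lin domGo_sub ranT_sub _ domGo_domG
  ranT_complete df) => [y [u du ->] | b [db b_orth]]; first exact: HTdom.
apply/f_orth/kerK_of_orth => // v dv; rewrite -HTdef //.
by apply: (graph_ip_eq0_sym ip0_inner ip1_inner); apply: b_orth; exists v.
Qed.

Lemma dtn_dom_of_orth u0 : BDG u0 ->
  (forall v p, kerK v -> is_orth_proj ip1 ip0 BDD D (astar (G v)) p -> gipD (G u0) p = 0) ->
  exists u, [/\ domG u, domD (a (G u)), m u - D (a (G u)) = 0 &
                is_orth_proj ip0 ip1 BDG G u u0].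
Proof.
move=> BDGu0 u0_orth; have du0 : domG u0 by case: BDGu0.
have [f df f_rep] := graph_riesz ip0_inner ip1_inner domG_sub G_lin (m u0, a (G u0))
  domGo_sub domGo_domG graph_domGo_complete.
have form_u0 w : domGo w -> weak_form u0 w = gipG f w.
  by move=> dw; rewrite -f_rep // /prod_ip /= addrC.
have [ur dur Tur] : ranT (- f).
  apply: ranT_of_orth (subspaceN domGo_sub df) _ => r Kr.
  have [dr dK _] := Kr.
  have [p proj_p] := graph_orth_proj ip1_inner ip0_inner domD_sub D_lin
    (graph_orth_subspace ip1_inner ip0_inner domD_sub D_lin _ domD_sub (fun _ => id))
    BDD_domD graph_BDD_complete dK.
  rewrite (graph_ipN ip0_inner ip1_inner domG_sub G_lin _ (domGo_domG df)) -form_u0 //.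
  by rewrite -(BDD_proj_form BDGu0 Kr proj_p) (u0_orth r p Kr proj_p) oppr0.
have du : domG (ur + u0) := subspaceD domG_sub (domGo_domG dur) du0.
have u_form w : domGo w -> weak_form (ur + u0) w = 0.
  move=> dw; rewrite (weak_formD _ (domGo_domG dur) du0) -HTdef // -Tur.
  by rewrite (graph_ipN ip0_inner ip1_inner domG_sub G_lin _ (domGo_domG df)) form_u0 // addNr.
have [daGu DaGu] := domD_of_orth (x := a (G (ur + u0))) (z := m (ur + u0)) u_form.
exists (ur + u0); split => //; first by rewrite DaGu subrr.
split=> // q BDGq; rewrite addrK.
by apply: (graph_ip_eq0_sym ip0_inner ip1_inner); case: BDGq => _; apply.
Qed.

Lemma dtn_domE u0 :
  (exists u, [/\ domG u, domD (a (G u)), m u - D (a (G u)) = 0 &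
                 is_orth_proj ip0 ip1 BDG G u u0]) <->
  (BDG u0 /\ forall v p, kerK v ->
     is_orth_proj ip1 ip0 BDD D (astar (G v)) p -> gipD (G u0) p = 0).
Proof.
split=> [[u [du daGu mu proj_u]] | [BDGu0 u0_orth]]; last exact: dtn_dom_of_orth.
by split=> [|v p]; [case: proj_u | exact: dtn_dom_orth du daGu mu proj_u].
Qed.

End DirichletToNeumann.

Theorem proposition5p3 (R : realType)
  (V0 V1 : lmodType R[i]) (ip0 : V0 -> V0 -> R[i]) (ip1 : V1 -> V1 -> R[i])
  (HH0 : is_hilbert ip0) (HH1 : is_hilbert ip1)
  (domG : V0 -> Prop) (G : V0 -> V1) (domD : V1 -> Prop) (D : V1 -> V0)
  (HG : densely_defined_closed ip0 ip1 domG G)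
  (HD : densely_defined_closed ip1 ip0 domD D)
  (* hypothesis  -G^star is contained in D *)
  (HGD : forall (y : V1) (z : V0),
      (forall x, domG x -> ip1 (G x) y = ip0 x z) -> domD y /\ D y = - z)
  (m mstar : V0 -> V0) (Hm : bounded_linear ip0 ip0 m) (Hmstar : is_adjoint ip0 ip0 m mstar)
  (a astar : V1 -> V1) (Ha : bounded_linear ip1 ip1 a) (Hastar : is_adjoint ip1 ip1 a astar)
  (Hcoer : exists mu : R[i], 0 < mu /\
      forall x, mu * hnorm ip1 x ^+ 2 <= 'Re (ip1 (a x) x))
  (* dom(G_ring) = dom(D^star); G_ring = -D^star is contained in G, so acts as G;
     dom(D_ring) = dom(G^star); D_ring = -G^star is contained in D, so acts as D *)
  (T : V0 -> V0)
  (HTdom : forall u, adj_dom ip1 ip0 domD D u -> adj_dom ip1 ip0 domD D (T u))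
  (HTdef : forall u v, adj_dom ip1 ip0 domD D u -> adj_dom ip1 ip0 domD D v ->
      graph_ip ip0 ip1 G (T u) v = ip1 (a (G u)) (G v) + ip0 (m u) v)
  (HTran : forall (un : nat -> V0) (y : V0),
      (forall n, adj_dom ip1 ip0 domD D (un n)) -> adj_dom ip1 ip0 domD D y ->
      cvg_with (graph_norm ip0 ip1 G) (fun n => T (un n)) y ->
      exists u, adj_dom ip1 ip0 domD D u /\ T u = y) :
  let domGo := adj_dom ip1 ip0 domD D in
  let domDo := adj_dom ip0 ip1 domG G in
  let BDG := graph_orth ip0 ip1 domG domGo G in
  let BDD := graph_orth ip1 ip0 domD domDo D in
  let domLambda := fun u0 : V0 => exists u : V0,
      [/\ domG u, domD (a (G u)), m u - D (a (G u)) = 0 &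
          is_orth_proj ip0 ip1 BDG G u u0] in
  let kerK := fun v : V0 =>
      [/\ domGo v, domD (astar (G v)) & mstar v = D (astar (G v))] in
  forall u0 : V0,
    domLambda u0 <->
    (BDG u0 /\ forall v p, kerK v -> is_orth_proj ip1 ip0 BDD D (astar (G v)) p ->
        graph_ip ip1 ip0 D (G u0) p = 0).
Proof.
move=> domGo domDo BDG BDD domLambda kerK u0.
have [m_lin _] := Hm; have [a_lin _] := Ha.
exact: (dtn_domE HH0 HH1 HG HD HGD (fun c x y _ _ => m_lin c x y)
  (fun c x y _ _ => a_lin c x y) Hmstar Hastar HTdom HTdef HTran u0).
Qed.
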